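(* Let $(X,d)$ be a proper metric space and $o\in X$ a point. Then $(\mathrm{CBI}(X),D_o)$ is a compact metric space, and the subset $\mathrm{RCBI}(X)\subset\mathrm{CBI}(X)$ of all reversible conical bicombings on $X$ is closed.
   Context: A bicombing on $(X,d)$ is a map $\sigma\colon X\times X\times[0,1]\to X$ such that each $\sigma_{xy}:=\sigma(x,y,\cdot)$ is a geodesic from $x$ to $y$ ($\sigma_{xy}(0)=x$, $\sigma_{xy}(1)=y$, $d(\sigma_{xy}(s),\sigma_{xy}(t))=|s-t|d(x,y)$); it is conical if $d(\sigma_{xy}(t),\sigma_{x'y'}(t))\le(1-t)d(x,x')+t\,d(y,y')$ for all $x,y,x',y'\in X$, $t\in[0,1]$, and reversible if $\sigma_{xy}(t)=\sigma_{yx}(1-t)$. $\mathrm{CBI}(X)$ denotes the set of all conical bicombings on $X$. For a point $o\in X$, $D_o(\sigma,\tau):=\sup\{3^{-k}d(\sigma_{xy}(t),\tau_{xy}(t)) : k\ge 0,\ x,y\in B_{2^k}(o),\ t\in[0,1]\}$ for $\sigma,\tau\in\mathrm{CBI}(X)$, where $B_r(o)$ is the ball of radius $r$ about $o$; this is a metric on $\mathrm{CBI}(X)$. A metric space is proper if closed bounded sets are compact. *)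

From Stdlib Require Import Reals List Lra.
From Coquelicot Require Import Coquelicot.
Open Scope R_scope.

Definition is_metric {T : Type} (e : T -> T -> R) : Prop :=
  (forall x y, 0 <= e x y) /\
  (forall x y, e x y = 0 <-> x = y) /\
  (forall x y, e x y = e y x) /\
  (forall x y z, e x z <= e x y + e y z).

Definition open_in {T : Type} (e : T -> T -> R) (U : T -> Prop) : Prop :=
  forall x, U x -> exists r, 0 < r /\ forall y, e x y < r -> U y.

Definition closed_in {T : Type} (e : T -> T -> R) (A : T -> Prop) : Prop :=
  open_in e (fun x => ~ A x).

Definition compact_in {T : Type} (e : T -> T -> R) (A : T -> Prop) : Prop :=
  forall (I : Type) (U : I -> T -> Prop),
    (forall i, open_in e (U i)) ->
    (forall x, A x -> exists i, U i x) ->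
    exists l : list I, forall x, A x -> exists i, In i l /\ U i x.

Definition bounded_in {T : Type} (e : T -> T -> R) (A : T -> Prop) : Prop :=
  exists x0 r, forall x, A x -> e x0 x <= r.

Definition proper_space {T : Type} (e : T -> T -> R) : Prop :=
  forall A, closed_in e A -> bounded_in e A -> compact_in e A.

Definition I01 : Type := {t : R | 0 <= t <= 1}.

Lemma I0_pf : 0 <= 0 <= 1. Proof. split; [apply Rle_refl | apply Rle_0_1]. Qed.
Lemma I1_pf : 0 <= 1 <= 1. Proof. split; [apply Rle_0_1 | apply Rle_refl]. Qed.
Definition I0 : I01 := exist _ 0 I0_pf.
Definition I1 : I01 := exist _ 1 I1_pf.

Lemma Iflip_pf (t : I01) : 0 <= 1 - proj1_sig t <= 1.
Proof. destruct t as [t [h0 h1]]; simpl; split; lra. Qed.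
Definition Iflip (t : I01) : I01 := exist _ (1 - proj1_sig t) (Iflip_pf t).

(** A map sigma : X x X x [0,1] -> X, written sigma x y t = sigma_xy(t). *)
Definition bimap (X : Type) : Type := X -> X -> I01 -> X.

Definition is_bicombing {X : Type} (d : X -> X -> R) (s : bimap X) : Prop :=
  forall x y,
    s x y I0 = x /\ s x y I1 = y /\
    forall u v : I01,
      d (s x y u) (s x y v) = Rabs (proj1_sig u - proj1_sig v) * d x y.

Definition is_conical {X : Type} (d : X -> X -> R) (s : bimap X) : Prop :=
  forall x y x' y' (t : I01),
    d (s x y t) (s x' y' t) <= (1 - proj1_sig t) * d x x' + proj1_sig t * d y y'.

Definition is_reversible {X : Type} (s : bimap X) : Prop :=
  forall x y (t : I01), s x y t = s y x (Iflip t).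

Definition CBI {X : Type} (d : X -> X -> R) : Type :=
  {s : bimap X | is_bicombing d s /\ is_conical d s}.

Definition RCBI {X : Type} (d : X -> X -> R) : CBI d -> Prop :=
  fun s => is_reversible (proj1_sig s).

Definition ball_cl {X : Type} (d : X -> X -> R) (o : X) (r : R) (x : X) : Prop :=
  d o x <= r.

Definition D_o {X : Type} (d : X -> X -> R) (o : X) (s t : CBI d) : R :=
  real (Lub_Rbar (fun r => exists (k : nat) (x y : X) (u : I01),
     ball_cl d o (2 ^ k) x /\ ball_cl d o (2 ^ k) y /\
     r = / (3 ^ k) * d (proj1_sig s x y u) (proj1_sig t x y u))).

From Stdlib Require Import Reals.
Open Scope R_scope.
From Stdlib Require Import Lra Lia List.
From Stdlib Require Import Classical ClassicalEpsilon FunctionalExtensionality ProofIrrelevance.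
From Coquelicot Require Import Coquelicot.
From mathcomp Require filter.

(* The weights 3^-k beat the growth 4 * 2^k of the distances on B_{2^k}(o), so D_o is a finite
   supremum, and since every pair x, y lies in some B_{2^k}(o), convergence in D_o is locally
   uniform convergence.  Reversibility is then a pointwise closed condition.  For compactness
   we show that every ultrafilter on CBI(X) converges.  By properness each point sigma_xy(t),
   which stays in the closed ball B_{d(x,y)}(x), has a limit along the ultrafilter; the limit
   map is again a conical bicombing, because the defining (in)equalities are closed.  Conical
   bicombings are uniformly equicontinuous, so finitely many values (on nets of a large ball
   and of [0,1]) control all terms of D_o with small k, while the terms with large k are
   small anyway. *)

Lemma filter_forall_in_list {T Y : Type} (G : (T -> Prop) -> Prop) {G_filter : filter.Filter G}
  (l : list Y) (P : Y -> T -> Prop) :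
  (forall a, In a l -> G (P a)) -> G (fun t => forall a, In a l -> P a t).
Proof.
  induction l as [|a l IH]; intros hl.
  - apply (filter.filterS (P := fun _ => True)); [intros t _ b []|apply filter.filterT].
  - apply (filter.filterS (P := fun t => P a t /\ forall b, In b l -> P b t)).
    + intros t [hat hlt] b [<-|hb]; auto.
    + apply filter.filterI; [apply hl; left; reflexivity|].
      apply IH; intros b hb; apply hl; right; exact hb.
Qed.

Lemma compact_in_of_ultrafilter_lim {T : Type} (e : T -> T -> R) :
  (forall G : (T -> Prop) -> Prop, filter.UltraFilter G ->
     exists z, forall r, 0 < r -> G (fun t => e z t < r)) ->
  compact_in e (fun _ => True).
Proof.
  intros hlim I U hU hcov. apply NNPP; intros hno.
  set (F := fun A : T -> Prop =>
    exists l : list I, forall t, (forall i, In i l -> ~ U i t) -> A t).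
  assert (F_proper : filter.ProperFilter F).
  { constructor; [|constructor].
    - intros [l hl]. apply hno. exists l. intros t _. apply NNPP; intros hn.
      apply (hl t). intros i hi hu. apply hn. exists i. auto.
    - exists nil. intros t _. exact Logic.I.
    - intros A B [l1 h1] [l2 h2]. exists (l1 ++ l2). intros t ht.
      split; [apply h1|apply h2]; intros i hi; apply ht; apply in_or_app; auto.
    - intros A B hAB [l h]. exists l. auto. }
  destruct (filter.ultraFilterLemma F_proper) as [G [G_ultra hFG]].
  destruct (hlim G G_ultra) as [z hz].
  destruct (hcov z Logic.I) as [i hi].
  destruct (hU i z hi) as [r [hr hball]].
  assert (hGi : G (fun t => ~ U i t)).
  { apply hFG. exists (i :: nil). intros t ht. apply ht. left; reflexivity. }
  destruct (filter.filter_ex (filter.filterI (hz r hr) hGi)) as [t [hzt hnt]].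
  exact (hnt (hball t hzt)).
Qed.

Lemma Lub_Rbar_real_ub (E : R -> Prop) (M r : R) :
  (forall r', E r' -> r' <= M) -> E r -> r <= real (Lub_Rbar E).
Proof.
  intros hM hr. destruct (Lub_Rbar_correct E) as [ub lub].
  specialize (ub r hr). specialize (lub (Finite M) hM).
  destruct (Lub_Rbar E); simpl in *; tauto.
Qed.

Lemma Lub_Rbar_real_le (E : R -> Prop) (r0 M : R) :
  E r0 -> (forall r, E r -> r <= M) -> real (Lub_Rbar E) <= M.
Proof.
  intros hr0 hM. destruct (Lub_Rbar_correct E) as [ub lub].
  specialize (ub r0 hr0). specialize (lub (Finite M) hM).
  destruct (Lub_Rbar E); simpl in *; tauto.
Qed.

Lemma I01_clamp_pf (r : R) : 0 <= Rmax 0 (Rmin 1 r) <= 1.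
Proof. split; [apply Rmax_l|apply Rmax_lub; [lra|apply Rmin_l]]. Qed.

Definition I01_clamp (r : R) : I01 := exist _ (Rmax 0 (Rmin 1 r)) (I01_clamp_pf r).

Lemma I01_clamp_id (r : R) : 0 <= r <= 1 -> proj1_sig (I01_clamp r) = r.
Proof. intros [h0 h1]. simpl. rewrite Rmin_right, Rmax_right; lra. Qed.

Lemma I01_finite_net (delta : R) : 0 < delta ->
  exists l : list I01, forall u : I01, exists v, In v l /\ Rabs (proj1_sig u - proj1_sig v) < delta.
Proof.
  intros hdelta.
  destruct (INR_archimed delta 1 hdelta) as [M hM].
  assert (hM0 : 0 < INR M) by nra.
  exists (map (fun j => I01_clamp (INR j / INR M)) (seq 0 (S M))).
  intros [u hu]; cbn [proj1_sig].
  destruct (nfloor_ex (u * INR M)) as [j hj]; [nra|].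
  set (v := INR j / INR M).
  assert (hjv : INR j = v * INR M) by (unfold v; field; lra).
  rewrite hjv in hj.
  assert (hv : 0 <= v <= 1) by (pose proof (pos_INR j); nra).
  exists (I01_clamp v). split.
  - apply (in_map (fun j => I01_clamp (INR j / INR M))), in_seq. split; [lia|].
    assert (hjM : INR j <= INR M) by nra. apply INR_le in hjM. lia.
  - rewrite I01_clamp_id by exact hv. rewrite Rabs_right; nra.
Qed.

Section MetricSpace.
Context {T : Type} {e : T -> T -> R}.
Hypothesis e_metric : is_metric e.

Lemma dist_ge0 x y : 0 <= e x y.
Proof. apply (proj1 e_metric). Qed.

Lemma dist_eq0 x y : e x y = 0 -> x = y.
Proof. apply (proj1 (proj2 e_metric)). Qed.

Lemma dist_xx x : e x x = 0.
Proof. apply (proj1 (proj2 e_metric)); reflexivity. Qed.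

Lemma dist_sym x y : e x y = e y x.
Proof. apply (proj1 (proj2 (proj2 e_metric))). Qed.

Lemma dist_triangle x y z : e x z <= e x y + e y z.
Proof. apply (proj2 (proj2 (proj2 e_metric))). Qed.

Lemma dist_quadrangle a b a' b' : Rabs (e a b - e a' b') <= e a a' + e b b'.
Proof.
  pose proof (dist_triangle a a' b). pose proof (dist_triangle a' b' b).
  pose proof (dist_triangle a' a b'). pose proof (dist_triangle a b b').
  rewrite (dist_sym b' b), (dist_sym a' a) in *.
  apply Rabs_le; lra.
Qed.

Lemma open_in_ball z r : open_in e (fun w => e z w < r).
Proof.
  intros w hw. exists (r - e z w). split; [lra|].
  intros y hy. pose proof (dist_triangle z w y). lra.
Qed.

Lemma closed_in_closed_ball z r : closed_in e (fun w => e z w <= r).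
Proof.
  intros w hw. apply Rnot_le_lt in hw. exists (e z w - r). split; [lra|].
  intros y hy hy'. pose proof (dist_triangle z y w). rewrite (dist_sym y w) in *. lra.
Qed.

Lemma proper_closed_ball_compact z r : proper_space e -> compact_in e (fun w => e z w <= r).
Proof.
  intros hp. apply hp; [apply closed_in_closed_ball|]. exists z, r. auto.
Qed.

Lemma compact_in_finite_net (K : T -> Prop) del : compact_in e K -> 0 < del ->
  exists N : list T, forall x, K x -> exists z, In z N /\ e z x < del.
Proof.
  intros hK hdel. apply (hK T (fun z w => e z w < del)).
  - intros z. apply open_in_ball.
  - intros x _. exists x. rewrite dist_xx. exact hdel.
Qed.

Definition is_filter_lim {Y : Type} (G : (Y -> Prop) -> Prop) (f : Y -> T) (z : T) : Prop :=
  forall eps, 0 < eps -> G (fun y => e z (f y) < eps).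

Lemma ex_filter_lim_in_compact {Y : Type} (G : (Y -> Prop) -> Prop) {G_ultra : filter.UltraFilter G}
  (K : T -> Prop) (f : Y -> T) :
  compact_in e K -> (forall y, K (f y)) -> exists z, is_filter_lim G f z.
Proof.
  intros hK hfK. apply NNPP; intros hno.
  (* Otherwise every w has a ball that f eventually avoids along G; finitely many cover K. *)
  set (I := {z : T & {eps : R | 0 < eps /\ G (fun y => ~ e z (f y) < eps)}}).
  destruct (hK I (fun i w => e (projT1 i) w < proj1_sig (projT2 i))) as [l hl].
  - intros i. apply open_in_ball.
  - intros w _.
    assert (hw : exists eps, 0 < eps /\ ~ G (fun y => e w (f y) < eps)).
    { apply NNPP; intros hn. apply hno. exists w. intros eps heps.
      apply NNPP; intros hG. apply hn. exists eps. auto. }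
    destruct hw as [eps [heps hG]].
    assert (hG' : G (fun y => ~ e w (f y) < eps)).
    { destruct (filter.in_ultra_setVsetC (fun y => e w (f y) < eps) G_ultra); tauto. }
    exists (existT _ w (exist _ eps (conj heps hG'))). simpl. rewrite dist_xx. exact heps.
  - assert (hfar : G (fun y => forall i, In i l -> ~ e (projT1 i) (f y) < proj1_sig (projT2 i))).
    { refine (filter_forall_in_list G l _ _).
      intros [z [eps [heps hG]]] _. exact hG. }
    destruct (filter.filter_ex hfar) as [y hy].
    destruct (hl (f y) (hfK y)) as [i [hi hiy]].
    exact (hy i hi hiy).
Qed.

Lemma filter_lim_const {Y : Type} (G : (Y -> Prop) -> Prop) {G_filter : filter.Filter G} (x : T) :
  is_filter_lim G (fun _ => x) x.
Proof.
  intros eps heps. apply (filter.filterS (P := fun _ => True)); [|apply filter.filterT].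
  intros y _. rewrite dist_xx. exact heps.
Qed.

Lemma filter_lim_dist_approx {Y : Type} (G : (Y -> Prop) -> Prop) {G_proper : filter.ProperFilter G}
  (f g : Y -> T) (z z' : T) eps :
  is_filter_lim G f z -> is_filter_lim G g z' -> 0 < eps ->
  exists y, Rabs (e z z' - e (f y) (g y)) < eps.
Proof.
  intros hf hg heps.
  destruct (filter.filter_ex (F := G)
    (filter.filterI (F := G) (hf (eps / 2) ltac:(lra)) (hg (eps / 2) ltac:(lra)))) as [y [hy hy']].
  exists y. pose proof (dist_quadrangle z z' (f y) (g y)). lra.
Qed.

Lemma filter_lim_dist_le {Y : Type} (G : (Y -> Prop) -> Prop) {G_proper : filter.ProperFilter G}
  (f g : Y -> T) (z z' : T) c :
  is_filter_lim G f z -> is_filter_lim G g z' -> (forall y, e (f y) (g y) <= c) -> e z z' <= c.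
Proof.
  intros hf hg hc. apply Rle_plus_epsilon. intros eps heps.
  destruct (filter_lim_dist_approx G f g z z' eps hf hg heps) as [y hy].
  specialize (hc y). apply Rabs_def2 in hy. lra.
Qed.

Lemma filter_lim_dist_ge {Y : Type} (G : (Y -> Prop) -> Prop) {G_proper : filter.ProperFilter G}
  (f g : Y -> T) (z z' : T) c :
  is_filter_lim G f z -> is_filter_lim G g z' -> (forall y, c <= e (f y) (g y)) -> c <= e z z'.
Proof.
  intros hf hg hc. apply Rle_plus_epsilon. intros eps heps.
  destruct (filter_lim_dist_approx G f g z z' eps hf hg heps) as [y hy].
  specialize (hc y). apply Rabs_def2 in hy. lra.
Qed.

Lemma filter_lim_unique {Y : Type} (G : (Y -> Prop) -> Prop) {G_proper : filter.ProperFilter G}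
  (f g : Y -> T) (z z' : T) :
  is_filter_lim G f z -> is_filter_lim G g z' -> (forall y, f y = g y) -> z = z'.
Proof.
  intros hf hg hfg. apply dist_eq0, Rle_antisym; [|apply dist_ge0].
  apply (filter_lim_dist_le G f g); auto.
  intros y. rewrite hfg, dist_xx. apply Rle_refl.
Qed.

End MetricSpace.

Arguments is_filter_lim {T} e {Y} G f z.

Section ConicalBicombings.
Variables (X : Type) (d : X -> X -> R) (o : X).
Hypothesis d_metric : is_metric d.

Lemma bicombing_dist_start (s : bimap X) : is_bicombing d s ->
  forall x y u, d x (s x y u) = proj1_sig u * d x y.
Proof.
  intros hs x y u. destruct (hs x y) as [h0 [_ hgeo]].
  rewrite <- h0 at 1. rewrite hgeo. destruct u as [u hu]; simpl.
  rewrite Rabs_left1 by lra. ring.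
Qed.

Lemma conical_bicombing_dist (s : bimap X) : is_bicombing d s -> is_conical d s ->
  forall x y x' y' u u',
  d (s x y u) (s x' y' u') <= Rabs (proj1_sig u - proj1_sig u') * d x y + d x x' + d y y'.
Proof.
  intros hs hc x y x' y' u u'.
  eapply Rle_trans; [apply (dist_triangle d_metric _ (s x y u'))|].
  destruct (hs x y) as [_ [_ hgeo]]. rewrite hgeo.
  pose proof (hc x y x' y' u'). pose proof (proj2_sig u').
  pose proof (dist_ge0 d_metric x x'). pose proof (dist_ge0 d_metric y y'). simpl in *. nra.
Qed.

Lemma cbi_dist_start_le (s : CBI d) x y u : d x (proj1_sig s x y u) <= d x y.
Proof.
  rewrite (bicombing_dist_start _ (proj1 (proj2_sig s))).
  destruct u as [u hu]. pose proof (dist_ge0 d_metric x y). simpl. nra.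
Qed.

Lemma cbi_dist_transfer (s t : CBI d) x y a b u v :
  d (proj1_sig s x y u) (proj1_sig t x y u) <=
  d (proj1_sig s a b v) (proj1_sig t a b v)
  + 2 * (Rabs (proj1_sig u - proj1_sig v) * d x y + d x a + d y b).
Proof.
  destruct s as [s [hs hcs]], t as [t [ht hct]]; simpl.
  pose proof (conical_bicombing_dist s hs hcs x y a b u v).
  pose proof (conical_bicombing_dist t ht hct x y a b u v).
  pose proof (dist_triangle d_metric (s x y u) (s a b v) (t x y u)).
  pose proof (dist_triangle d_metric (s a b v) (t a b v) (t x y u)).
  rewrite (dist_sym d_metric (t a b v)) in *. lra.
Qed.

Lemma D_o_term_le (s t : CBI d) k x y u :
  ball_cl d o (2 ^ k) x -> ball_cl d o (2 ^ k) y ->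
  / 3 ^ k * d (proj1_sig s x y u) (proj1_sig t x y u) <= 4 * (2 / 3) ^ k.
Proof.
  unfold ball_cl. intros hx hy.
  assert (hdist : d (proj1_sig s x y u) (proj1_sig t x y u) <= 4 * 2 ^ k).
  { pose proof (dist_triangle d_metric (proj1_sig s x y u) x (proj1_sig t x y u)).
    pose proof (cbi_dist_start_le s x y u). pose proof (cbi_dist_start_le t x y u).
    pose proof (dist_triangle d_metric x o y).
    rewrite (dist_sym d_metric x o), (dist_sym d_metric (proj1_sig s x y u) x) in *. lra. }
  unfold Rdiv. rewrite Rpow_mult_distr, pow_inv.
  assert (0 < / 3 ^ k) by (apply Rinv_0_lt_compat, pow_lt; lra). nra.
Qed.

Lemma ball_cl_center k : ball_cl d o (2 ^ k) o.
Proof. unfold ball_cl. rewrite (dist_xx d_metric). left. apply pow_lt. lra. Qed.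

Lemma D_o_ge (s t : CBI d) k x y u :
  ball_cl d o (2 ^ k) x -> ball_cl d o (2 ^ k) y ->
  / 3 ^ k * d (proj1_sig s x y u) (proj1_sig t x y u) <= D_o d o s t.
Proof.
  intros hx hy. apply (Lub_Rbar_real_ub _ 4).
  - intros r [k' [x' [y' [u' [hx' [hy' ->]]]]]].
    pose proof (D_o_term_le s t k' x' y' u' hx' hy').
    assert ((2 / 3) ^ k' <= 1).
    { destruct k' as [|k']; [simpl; lra|]. left; apply pow_lt_1_compat; [lra|lia]. }
    lra.
  - exists k, x, y, u. auto.
Qed.

Lemma D_o_le (s t : CBI d) M :
  (forall k x y u, ball_cl d o (2 ^ k) x -> ball_cl d o (2 ^ k) y ->
     / 3 ^ k * d (proj1_sig s x y u) (proj1_sig t x y u) <= M) ->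
  D_o d o s t <= M.
Proof.
  intros hM. apply (Lub_Rbar_real_le _ (/ 3 ^ 0 * d (proj1_sig s o o I0) (proj1_sig t o o I0))).
  - exists 0%nat, o, o, I0. repeat split; apply ball_cl_center.
  - intros r [k [x [y [u [hx [hy ->]]]]]]. auto.
Qed.

Lemma D_o_ge0 (s t : CBI d) : 0 <= D_o d o s t.
Proof.
  eapply Rle_trans; [|apply (D_o_ge s t 0 o o I0); apply ball_cl_center].
  simpl. rewrite Rinv_1, Rmult_1_l. apply (dist_ge0 d_metric).
Qed.

Lemma dist_le_D_o (s t : CBI d) k x y u :
  ball_cl d o (2 ^ k) x -> ball_cl d o (2 ^ k) y ->
  d (proj1_sig s x y u) (proj1_sig t x y u) <= 3 ^ k * D_o d o s t.
Proof.
  intros hx hy. pose proof (D_o_ge s t k x y u hx hy) as hterm.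
  assert (h3 : 0 < 3 ^ k) by (apply pow_lt; lra).
  apply (Rmult_le_compat_l (3 ^ k)) in hterm; [|lra].
  rewrite <- Rmult_assoc, Rinv_r, Rmult_1_l in hterm by lra. exact hterm.
Qed.

Lemma ex_pow2_ball_cl x y : exists k, ball_cl d o (2 ^ k) x /\ ball_cl d o (2 ^ k) y.
Proof.
  destruct (Pow_x_infinity 2 ltac:(rewrite Rabs_right; lra) (d o x + d o y)) as [k hk].
  exists k. specialize (hk k (Nat.le_refl k)).
  rewrite Rabs_right in hk by (apply Rle_ge, pow_le; lra).
  unfold ball_cl. pose proof (dist_ge0 d_metric o x). pose proof (dist_ge0 d_metric o y). lra.
Qed.

Lemma D_o_metric : is_metric (D_o d o).
Proof.
  split; [exact D_o_ge0|split; [|split]].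
  - intros s t. split.
    + intros h0. destruct s as [s hs], t as [t ht].
      assert (hst : s = t).
      { apply functional_extensionality; intro x.
        apply functional_extensionality; intro y.
        apply functional_extensionality; intro u.
        destruct (ex_pow2_ball_cl x y) as [k [hx hy]].
        pose proof (dist_le_D_o (exist _ s hs) (exist _ t ht) k x y u hx hy) as hle.
        rewrite h0, Rmult_0_r in hle. simpl in hle.
        apply (dist_eq0 d_metric), Rle_antisym; [exact hle|apply (dist_ge0 d_metric)]. }
      subst t. f_equal. apply proof_irrelevance.
    + intros <-. apply Rle_antisym; [|apply D_o_ge0].
      apply D_o_le. intros. rewrite (dist_xx d_metric), Rmult_0_r. apply Rle_refl.
  - intros s t. apply Rle_antisym; apply D_o_le; intros k x y u hx hy;
      rewrite (dist_sym d_metric); apply D_o_ge; assumption.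
  - intros s t r. apply D_o_le. intros k x y u hx hy.
    pose proof (D_o_ge s t k x y u hx hy). pose proof (D_o_ge t r k x y u hx hy).
    pose proof (dist_triangle d_metric (proj1_sig s x y u) (proj1_sig t x y u) (proj1_sig r x y u)).
    assert (0 < / 3 ^ k) by (apply Rinv_0_lt_compat, pow_lt; lra).
    nra.
Qed.

Lemma RCBI_closed : closed_in (D_o d o) (RCBI d).
Proof.
  intros s hs. unfold RCBI, is_reversible in hs.
  apply not_all_ex_not in hs as [x hs]. apply not_all_ex_not in hs as [y hs].
  apply not_all_ex_not in hs as [u hs].
  set (gap := d (proj1_sig s x y u) (proj1_sig s y x (Iflip u))).
  assert (hgap : 0 < gap).
  { destruct (dist_ge0 d_metric (proj1_sig s x y u) (proj1_sig s y x (Iflip u))) as [h|h];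
      [exact h|].
    exfalso. apply hs, (dist_eq0 d_metric). symmetry. exact h. }
  destruct (ex_pow2_ball_cl x y) as [k [hx hy]].
  assert (h3 : 0 < 3 ^ k) by (apply pow_lt; lra).
  exists (gap / (2 * 3 ^ k)). split; [apply Rdiv_lt_0_compat; lra|].
  intros r hr hrev. unfold RCBI, is_reversible in hrev.
  pose proof (dist_le_D_o s r k x y u hx hy) as hxy.
  pose proof (dist_le_D_o s r k y x (Iflip u) hy hx) as hyx.
  rewrite <- hrev in hyx.
  assert (hclose : 3 ^ k * D_o d o s r < gap / 2).
  { apply (Rmult_lt_compat_l (3 ^ k)) in hr; [|lra].
    replace (3 ^ k * (gap / (2 * 3 ^ k))) with (gap / 2) in hr by (field; lra). exact hr. }
  pose proof (dist_triangle d_metric (proj1_sig s x y u) (proj1_sig r x y u)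
    (proj1_sig s y x (Iflip u))) as htri.
  rewrite (dist_sym d_metric (proj1_sig r x y u)) in htri. fold gap in htri. lra.
Qed.

Lemma D_o_le_of_nets (s t : CBI d) (K : nat) (eta del delta : R) (N : list X) (l : list I01) :
  (forall k, (K <= k)%nat -> 4 * (2 / 3) ^ k <= eta) ->
  (forall x, d o x <= 2 ^ K -> exists a, In a N /\ d a x < del) ->
  (forall u : I01, exists v, In v l /\ Rabs (proj1_sig u - proj1_sig v) < delta) ->
  (forall a, In a N -> forall b, In b N -> forall v, In v l ->
     d (proj1_sig s a b v) (proj1_sig t a b v) < del) ->
  D_o d o s t <= Rmax eta (5 * del + 4 * delta * 2 ^ K).
Proof.
  intros htail hN hl hst. apply D_o_le. intros k x y u hx hy.
  destruct (Nat.le_gt_cases K k) as [hk|hk].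
  - eapply Rle_trans; [apply (D_o_term_le s t k x y u hx hy)|].
    eapply Rle_trans; [apply htail, hk|apply Rmax_l].
  - eapply Rle_trans; [|apply Rmax_r].
    assert (h2k : 2 ^ k <= 2 ^ K) by (apply Rle_pow; [lra|lia]).
    unfold ball_cl in hx, hy.
    destruct (hN x) as [a [ha hax]]; [lra|].
    destruct (hN y) as [b [hb hby]]; [lra|].
    destruct (hl u) as [v [hv huv]].
    pose proof (cbi_dist_transfer s t x y a b u v) as htransfer.
    pose proof (hst a ha b hb v hv).
    assert (hxy : d x y <= 2 * 2 ^ K).
    { pose proof (dist_triangle d_metric x o y). rewrite (dist_sym d_metric x o) in *. lra. }
    assert (Rabs (proj1_sig u - proj1_sig v) * d x y <= delta * (2 * 2 ^ K)).
    { apply Rmult_le_compat; [apply Rabs_pos|apply (dist_ge0 d_metric)|lra|exact hxy]. }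
    assert (h3k : 0 < / 3 ^ k <= 1).
    { split; [apply Rinv_0_lt_compat, pow_lt; lra|].
      rewrite <- Rinv_1. apply Rinv_le_contravar; [lra|apply pow_R1_Rle; lra]. }
    pose proof (dist_ge0 d_metric (proj1_sig s x y u) (proj1_sig t x y u)).
    rewrite (dist_sym d_metric x a), (dist_sym d_metric y b) in htransfer.
    nra.
Qed.

Section UltrafilterLimit.
Variable G : (CBI d -> Prop) -> Prop.
Hypothesis G_ultra : filter.UltraFilter G.
Hypothesis d_proper : proper_space d.

Lemma ex_pointwise_filter_lim x y u :
  exists z, is_filter_lim d G (fun t : CBI d => proj1_sig t x y u) z.
Proof.
  apply (ex_filter_lim_in_compact d_metric G (fun w => d x w <= d x y)).
  - apply (proper_closed_ball_compact d_metric x (d x y) d_proper).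
  - intros t. apply cbi_dist_start_le.
Qed.

Definition lim_bimap : bimap X := fun x y u =>
  proj1_sig (constructive_indefinite_description _ (ex_pointwise_filter_lim x y u)).

Lemma lim_bimapP x y u :
  is_filter_lim d G (fun t : CBI d => proj1_sig t x y u) (lim_bimap x y u).
Proof.
  exact (proj2_sig (constructive_indefinite_description _ (ex_pointwise_filter_lim x y u))).
Qed.

Lemma lim_bimap_bicombing : is_bicombing d lim_bimap.
Proof.
  intros x y. split; [|split].
  - apply (filter_lim_unique d_metric G _ _ _ _
      (lim_bimapP x y I0) (filter_lim_const d_metric G x)).
    intros t. apply (proj1 (proj1 (proj2_sig t) x y)).
  - apply (filter_lim_unique d_metric G _ _ _ _
      (lim_bimapP x y I1) (filter_lim_const d_metric G y)).
    intros t. apply (proj1 (proj2 (proj1 (proj2_sig t) x y))).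
  - intros u v. apply Rle_antisym.
    + apply (filter_lim_dist_le d_metric G _ _ _ _ _ (lim_bimapP x y u) (lim_bimapP x y v)).
      intros t. destruct (proj1 (proj2_sig t) x y) as [_ [_ hgeo]]. rewrite hgeo. apply Rle_refl.
    + apply (filter_lim_dist_ge d_metric G _ _ _ _ _ (lim_bimapP x y u) (lim_bimapP x y v)).
      intros t. destruct (proj1 (proj2_sig t) x y) as [_ [_ hgeo]]. rewrite hgeo. apply Rle_refl.
Qed.

Lemma lim_bimap_conical : is_conical d lim_bimap.
Proof.
  intros x y x' y' u.
  apply (filter_lim_dist_le d_metric G _ _ _ _ _ (lim_bimapP x y u) (lim_bimapP x' y' u)).
  intros t. apply (proj2 (proj2_sig t)).
Qed.

Definition lim_cbi : CBI d := exist _ lim_bimap (conj lim_bimap_bicombing lim_bimap_conical).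

Lemma filter_lim_cbi eps : 0 < eps -> G (fun t => D_o d o lim_cbi t < eps).
Proof.
  intros heps.
  destruct (pow_lt_1_zero (2 / 3) ltac:(rewrite Rabs_right; lra) (eps / 8) ltac:(lra)) as [K hK].
  assert (h2K : 0 < 2 ^ K) by (apply pow_lt; lra).
  (* chosen so that 5 * del + 4 * delta * 2 ^ K = eps / 2 in [D_o_le_of_nets] *)
  set (del := eps / 20). set (delta := eps / (16 * 2 ^ K)).
  destruct (compact_in_finite_net d_metric _ del
    (proper_closed_ball_compact d_metric o (2 ^ K) d_proper)) as [N hN]; [unfold del; lra|].
  destruct (I01_finite_net delta) as [l hl]; [unfold delta; apply Rdiv_lt_0_compat; lra|].
  apply (filter.filterS (P := fun t => forall a, In a N -> forall b, In b N -> forall v, In v l ->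
           d (lim_bimap a b v) (proj1_sig t a b v) < del)).
  - intros t ht.
    assert (htail : forall k, (K <= k)%nat -> 4 * (2 / 3) ^ k <= eps / 2).
    { intros k hk. specialize (hK k hk).
      rewrite Rabs_right in hK by (apply Rle_ge, pow_le; lra). lra. }
    eapply Rle_lt_trans;
      [exact (D_o_le_of_nets lim_cbi t K (eps / 2) del delta N l htail hN hl ht)|].
    apply Rmax_lub_lt; [lra|]. unfold del, delta. field_simplify; lra.
  - refine (filter_forall_in_list G N _ _); intros a _.
    refine (filter_forall_in_list G N _ _); intros b _.
    refine (filter_forall_in_list G l _ _); intros v _.
    apply lim_bimapP. unfold del; lra.
Qed.

End UltrafilterLimit.

Lemma CBI_compact : proper_space d -> compact_in (D_o d o) (fun _ => True).
Proof.
  intros d_proper. apply compact_in_of_ultrafilter_lim. intros G G_ultra.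
  exists (lim_cbi G G_ultra d_proper). apply filter_lim_cbi.
Qed.

End ConicalBicombings.

Theorem lemma4p1 (X : Type) (d : X -> X -> R) (o : X) :
  is_metric d -> proper_space d ->
  is_metric (D_o d o) /\
  compact_in (D_o d o) (fun _ : CBI d => True) /\
  closed_in (D_o d o) (RCBI d).
Proof.
  intros d_metric d_proper.
  split; [|split].
  - exact (D_o_metric X d o d_metric).
  - exact (CBI_compact X d o d_metric d_proper).
  - exact (RCBI_closed X d o d_metric).
Qed.
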